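(* For any $c\in\mathbb{R}$ and any $\lambda\in\mathbb{Z}\setminus\{0,1\}$, the equation $$\mu(u_t)-u_{txx}+\lambda\mu(u)u_x=\lambda u_xu_{xx}+uu_{xxx}$$ admits the peaked period-one traveling-wave solution $u(t,x)=\varphi(x-ct)$, where $$\varphi(x)=\frac{c}{26}\big(12x^2+23\big)\quad\text{for }x\in[-\tfrac12,\tfrac12],$$ and $\varphi$ is extended periodically (with period $1$) to the real line.
   Context: Here $u(t,\cdot)$ is a $1$-periodic function on $\mathbb{R}$ (a function on $S^1=\mathbb{R}/\mathbb{Z}$) and $\mu(u)=\int_0^1u\,dx$. Since $\varphi$ is not smooth at $x\equiv\frac12\pmod 1$, the solution is understood in the weak sense, i.e. as a distributional solution of $u_t+uu_x+\Lambda_\mu^{-2}\partial_x\big(\lambda\mu(u)u+\frac{3-\lambda}{2}u_x^2\big)=0$, where $\Lambda_\mu^{-2}$ is the inverse of $\Lambda_\mu^2v=\mu(v)-v_{xx}$. *)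

From Stdlib Require Import Reals.
From Coquelicot Require Import Coquelicot.
Open Scope R_scope.

Definition mu (f : R -> R) : R := RInt f 0 1.

Definition periodic1 (f : R -> R) : Prop := forall x, f (x + 1) = f x.

(** Spatial derivative u_x(t,x) (pointwise; for Lipschitz u it is the a.e.
    derivative, which is all that enters the integrals below). *)
Definition ux (u : R -> R -> R) (t x : R) : R := Derive (fun y => u t y) x.

Definition smooth1 (f : R -> R) : Prop :=
  exists D : nat -> R -> R, D O = f /\
    forall n x, is_derive (D n) x (D (S n) x).

Definition smooth2 (f : R -> R -> R) : Prop :=
  exists D : nat -> nat -> R -> R -> R, D O O = f /\
    (forall i j t x, is_derive (fun s => D i j s x) t (D (S i) j t x)) /\
    (forall i j t x, is_derive (fun y => D i j t y) x (D i (S j) t x)) /\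
    (forall i j (p : R * R),
        continuous (fun q : R * R => D i j (fst q) (snd q)) p).

Definition test_fun (psi : R -> R -> R) (T : R) : Prop :=
  smooth2 psi /\ (forall t, periodic1 (psi t)) /\
  (forall t x, T < Rabs t -> psi t x = 0).

(** [Lambda_inv2 f v] : v = Lambda_mu^{-2} f, where Lambda_mu^2 v = mu(v) - v_xx,
    understood in the sense of periodic distributions: v is 1-periodic,
    integrable over a period, and for every smooth 1-periodic chi,
      <mu(v) - v_xx, chi> = \int_0^1 v (mu(chi) - chi'') = \int_0^1 f chi.
    (Lambda_mu^2 is injective on periodic distributions, so this determines
    v up to a null set.) *)
Definition Lambda_inv2 (f v : R -> R) : Prop :=
  periodic1 v /\ ex_RInt v 0 1 /\
  forall chi : R -> R, smooth1 chi -> periodic1 chi ->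
    ex_RInt (fun x => v x * (mu chi - Derive_n chi 2 x)) 0 1 /\
    ex_RInt (fun x => f x * chi x) 0 1 /\
    RInt (fun x => v x * (mu chi - Derive_n chi 2 x)) 0 1
      = RInt (fun x => f x * chi x) 0 1.

(** Weak (distributional) solution on R_t x S^1 of
      u_t + u u_x + Lambda_mu^{-2} d_x ( lam mu(u) u + (3-lam)/2 u_x^2 ) = 0.
    Since Lambda_mu^{-2} commutes with d_x, we write the nonlocal term as
    d_x F with F(t,.) = Lambda_mu^{-2}( lam mu(u) u + (3-lam)/2 u_x^2 ). *)
Definition weak_solution (lam : R) (u : R -> R -> R) : Prop :=
  (forall t, periodic1 (u t)) /\
  exists F : R -> R -> R,
    (forall t, Lambda_inv2
        (fun x => lam * mu (u t) * u t x + (3 - lam) / 2 * (ux u t x) ^ 2)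
        (F t)) /\
    forall (psi : R -> R -> R) (T : R), test_fun psi T ->
      let integrand t x :=
        - u t x * Derive (fun s => psi s x) t
        + u t x * ux u t x * psi t x
        - F t x * Derive (fun y => psi t y) x in
      (forall t, ex_RInt (fun x => integrand t x) 0 1) /\
      ex_RInt (fun t => RInt (fun x => integrand t x) 0 1) (- T) T /\
      RInt (fun t => RInt (fun x => integrand t x) 0 1) (- T) T = 0.

From Stdlib Require Import Reals ZArith Lra.
From Coquelicot Require Import Coquelicot.
Open Scope R_scope.

(* In the frame moving with the wave, [u_t = - c u_x], so [u_t + u u_x + d_x F = 0] holds off
   the peak as soon as [F = c u - u^2/2 + K].  Because [u(±1/2) = c], the derivative
   [F_x = (c - u) u_x] vanishes at the peak: F is C^1 on the circle, [F_xx] carries no Dirac mass,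
   and [K] is the constant for which [mu(F) - F_xx = lam mu(u) u + (3 - lam)/2 u_x^2] on the window
   [-1/2, 1/2].  Testing this against [chi] is two integrations by parts on the window with
   vanishing boundary terms.  Testing the equation against [psi] leaves, in the variable
   [y = x - c t], the integrand [- u(y) (psi_t + c psi_x)(t, y + c t)], whose space integral is the
   time derivative of [∫ u(y) psi(t, y + c t) dy] and so integrates to zero over the support of
   [psi], plus the exact y-derivative of [(u^2/2 - K) psi], which integrates to zero over a
   period. *)

Lemma ex_derive_continuous_R (f : R -> R) (x : R) : ex_derive f x -> continuous f x.
Proof. apply (@ex_derive_continuous R_AbsRing R_NormedModule). Qed.

Lemma is_derive_continuous (f f' : R -> R) :
  (forall x, is_derive f x (f' x)) -> forall x, continuous f x.
Proof. intros Hf x. apply ex_derive_continuous_R. exists (f' x). apply Hf. Qed.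

Lemma is_RInt_RInt_continuous (f : R -> R) (a b : R) :
  (forall x, continuous f x) -> is_RInt f a b (RInt f a b).
Proof.
  intros Hf. apply (@RInt_correct R_CompleteNormedModule).
  apply (ex_RInt_continuous (V := R_CompleteNormedModule)). intros x _. apply Hf.
Qed.

Lemma is_derive_shift (f f' : R -> R) (s : R) :
  (forall x, is_derive f x (f' x)) -> forall y, is_derive (fun y => f (y + s)) y (f' (y + s)).
Proof.
  intros Hf y.
  assert (H := is_derive_comp f (fun z => z + s) y _ 1 (Hf (y + s)) ltac:(auto_derive; auto)).
  unfold scal in H; simpl in H; unfold mult in H; simpl in H. rewrite Rmult_1_l in H. exact H.
Qed.

Lemma continuous_shift (f : R -> R) (s : R) :
  (forall x, continuous f x) -> forall y, continuous (fun y => f (y + s)) y.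
Proof.
  intros Hf y. apply (continuous_comp (fun y => y + s) f); [|apply Hf].
  apply (continuous_plus (fun y => y) (fun _ => s)); [apply continuous_id | apply continuous_const].
Qed.

(** * Integrals of periodic functions *)

Lemma is_RInt_shift (h : R -> R) (a b s l : R) :
  is_RInt h a b l -> is_RInt (fun y => h (y + s)) (a - s) (b - s) l.
Proof.
  intros Hab.
  replace a with (1 * (a - s) + s) in Hab by ring.
  replace b with (1 * (b - s) + s) in Hab by ring.
  apply is_RInt_comp_lin in Hab.
  eapply is_RInt_ext; [|exact Hab]. intros y _.
  unfold scal; simpl; unfold mult; simpl. rewrite !Rmult_1_l. reflexivity.
Qed.

Lemma is_RInt_translate (h : R -> R) (a b v l : R) :
  (forall y, h (y + v) = h y) -> is_RInt h a b l -> is_RInt h (a - v) (b - v) l.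
Proof.
  intros Hv Hab. apply (is_RInt_shift h a b v l) in Hab.
  eapply is_RInt_ext; [|exact Hab]. intros y _. apply Hv.
Qed.

Lemma is_RInt_period_step (h : R -> R) (a b l : R) :
  periodic1 h -> a <= b <= a + 1 -> is_RInt h a (a + 1) l -> is_RInt h b (b + 1) l.
Proof.
  intros Hp Hab H.
  assert (Ex : ex_RInt h a (a + 1)) by (exists l; exact H).
  destruct (ex_RInt_Chasles_1 h a b (a + 1) ltac:(lra) Ex) as [l1 H1].
  destruct (ex_RInt_Chasles_2 h a b (a + 1) ltac:(lra) Ex) as [l2 H2].
  assert (Hl : l = l1 + l2).
  { apply (filterlim_locally_unique _ _ _ H). exact (is_RInt_Chasles h a b (a + 1) _ _ H1 H2). }
  assert (H1' : is_RInt h (a + 1) (b + 1) l1).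
  { replace (a + 1) with (a - -1) by ring. replace (b + 1) with (b - -1) by ring.
    apply is_RInt_translate; [|exact H1]. intros y.
    rewrite <- (Hp (y + -1)). f_equal; ring. }
  rewrite Hl, (Rplus_comm l1 l2). exact (is_RInt_Chasles h b (a + 1) (b + 1) _ _ H2 H1').
Qed.

Lemma is_RInt_period_near (h : R -> R) (a b l : R) :
  periodic1 h -> a - 1 <= b <= a + 1 -> is_RInt h a (a + 1) l -> is_RInt h b (b + 1) l.
Proof.
  intros Hp Hab H. destruct (Rle_dec a b).
  - apply (is_RInt_period_step h a); [exact Hp | lra | exact H].
  - apply (is_RInt_period_step h (a - 1)); [exact Hp | lra |].
    replace (a - 1 + 1) with (a + 1 - 1) by ring. apply is_RInt_translate; assumption.
Qed.

Lemma is_RInt_period (h : R -> R) (a b l : R) :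
  periodic1 h -> is_RInt h a (a + 1) l -> is_RInt h b (b + 1) l.
Proof.
  intros Hp H.
  assert (Hn : forall (n : nat) b, a - INR n <= b <= a + INR n -> is_RInt h b (b + 1) l).
  { induction n as [|n IH]; intros b' Hb.
    - simpl in Hb. replace b' with a by lra. exact H.
    - rewrite S_INR in Hb. pose proof (pos_INR n) as Hn0.
      set (d := (b' - a) / (INR n + 1)).
      assert (Hd : b' - a = d * (INR n + 1)) by (unfold d; field; lra).
      assert (Hd1 : -1 <= d <= 1) by (split; nra).
      apply (is_RInt_period_near h (b' - d)); [exact Hp | lra |].
      apply IH. split; nra. }
  destruct (INR_archimed 1 (Rabs (b - a)) ltac:(lra)) as [n Hn'].
  apply (Hn n). assert (Hba : Rabs (b - a) <= INR n) by lra.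
  apply Rabs_le_between in Hba. lra.
Qed.

(* Only the open window is used, so values at the kink [±1/2] (where [Derive] is junk) are
   irrelevant. *)
Lemma is_RInt_periodic_window (h p : R -> R) (s l : R) :
  periodic1 h -> (forall y, -/2 < y < /2 -> h (y + s) = p y) ->
  is_RInt p (-/2) (/2) l -> is_RInt h 0 1 l.
Proof.
  intros Hp Hhp H.
  assert (Hw : is_RInt (fun y => h (y + s)) (-/2) (/2) l).
  { eapply is_RInt_ext; [|exact H]. intros y Hy.
    rewrite Rmin_left, Rmax_right in Hy by lra. symmetry. apply Hhp, Hy. }
  apply (is_RInt_shift _ _ _ (- s)) in Hw.
  replace (/2 - - s) with (s - /2 + 1) in Hw by field.
  replace (-/2 - - s) with (s - /2) in Hw by ring.
  assert (Hs : is_RInt h (s - /2) (s - /2 + 1) l).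
  { eapply is_RInt_ext; [|exact Hw]. intros y _. cbv beta.
    now rewrite Rplus_assoc, Rplus_opp_l, Rplus_0_r. }
  apply (is_RInt_period h _ 0) in Hs; [|exact Hp].
  rewrite Rplus_0_l in Hs. exact Hs.
Qed.

Lemma periodic1_Derive (f : R -> R) : periodic1 f -> periodic1 (Derive f).
Proof.
  intros Hf x. unfold Derive. f_equal. apply Lim_ext. intros h.
  replace (x + 1 + h) with (x + h + 1) by ring. rewrite !Hf. reflexivity.
Qed.

Lemma periodic1_is_derive (f f' : R -> R) :
  periodic1 f -> (forall x, is_derive f x (f' x)) -> periodic1 f'.
Proof.
  intros Hf Hf' x. rewrite <- (is_derive_unique _ _ _ (Hf' (x + 1))),
    <- (is_derive_unique _ _ _ (Hf' x)). apply periodic1_Derive, Hf.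
Qed.

Lemma periodic1_Derive_n (f : R -> R) (n : nat) : periodic1 f -> periodic1 (Derive_n f n).
Proof.
  intros Hf. induction n as [|n IH]; [exact Hf|].
  intros x. simpl. exact (periodic1_Derive _ IH x).
Qed.

Lemma continuous_eq0_boundary (f : R -> R) (T s : R) :
  continuous f s -> (forall x, T < Rabs x -> f x = 0) -> T <= Rabs s -> f s = 0.
Proof.
  intros Hc Hz Hs.
  assert (Hlim : forall F, ProperFilter F -> filter_le F (locally s) ->
                   F (fun x => 0 = f x) -> f s = 0).
  { intros F HF HFs H0. apply (filterlim_locally_unique (F := F) f).
    - exact (filterlim_filter_le_1 _ HFs Hc).
    - exact (filterlim_ext_loc _ _ H0 (filterlim_const 0)). }
  (* Approach [s] from the side away from [0], where [f] vanishes. *)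
  destruct (Rle_dec 0 s).
  - apply (Hlim (at_right s)); [apply at_right_proper_filter | apply filter_le_within |].
    unfold at_right, within. apply filter_forall. intros x Hx. symmetry. apply Hz.
    rewrite Rabs_pos_eq in Hs |- *; lra.
  - apply (Hlim (at_left s)); [apply at_left_proper_filter | apply filter_le_within |].
    unfold at_left, within. apply filter_forall. intros x Hx. symmetry. apply Hz.
    rewrite Rabs_left in Hs |- *; lra.
Qed.

Lemma is_RInt_green (p p1 p2 q q1 q2 : R -> R) (a b : R) :
  (forall y, is_derive p y (p1 y)) -> (forall y, is_derive p1 y (p2 y)) ->
  (forall y, is_derive q y (q1 y)) -> (forall y, is_derive q1 y (q2 y)) ->
  (forall y, continuous p2 y) -> (forall y, continuous q2 y) ->
  is_RInt (fun y => p2 y * q y - p y * q2 y) a b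
    ((p1 b * q b - p b * q1 b) - (p1 a * q a - p a * q1 a)).
Proof.
  intros Hp Hp1 Hq Hq1 Hp2 Hq2.
  assert (I1 := is_RInt_scal_derive p1 q p2 q1 a b (fun y _ => Hp1 y) (fun y _ => Hq y)
                  (fun y _ => Hp2 y) (fun y _ => is_derive_continuous _ _ Hq1 y)).
  assert (I2 := is_RInt_scal_derive p q1 p1 q2 a b (fun y _ => Hp y) (fun y _ => Hq1 y)
                  (fun y _ => is_derive_continuous _ _ Hp1 y) (fun y _ => Hq2 y)).
  assert (I := is_RInt_minus _ _ _ _ _ _ I1 I2).
  unfold minus, plus, opp, scal in I; simpl in I; unfold mult in I; simpl in I.
  match type of I with is_RInt _ _ _ ?v =>
    replace (_ - _ - _) with v by ring end.
  eapply is_RInt_ext; [|exact I]. intros y _. simpl. ring.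
Qed.

(** * Integrals depending on a parameter *)

Definition has_continuous_partials (g gt gz : R -> R -> R) : Prop :=
  (forall t z, is_derive (fun s => g s z) t (gt t z)) /\
  (forall t z, is_derive (g t) z (gz t z)) /\
  (forall p, continuous (fun q : R * R => gt (fst q) (snd q)) p) /\
  (forall p, continuous (fun q : R * R => gz (fst q) (snd q)) p).

Lemma smooth2_partials (D : nat -> nat -> R -> R -> R) :
  (forall i j t x, is_derive (fun s => D i j s x) t (D (S i) j t x)) ->
  (forall i j t x, is_derive (fun y => D i j t y) x (D i (S j) t x)) ->
  (forall i j p, continuous (fun q : R * R => D i j (fst q) (snd q)) p) ->
  forall i j, has_continuous_partials (D i j) (D (S i) j) (D i (S j)).
Proof.
  intros Ht Hx Hc i j.
  exact (conj (Ht i j) (conj (Hx i j) (conj (Hc (S i) j) (Hc i (S j))))).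
Qed.

Lemma has_continuous_partials_plus_scal (g1 g1t g1z g2 g2t g2z : R -> R -> R) (k : R) :
  has_continuous_partials g1 g1t g1z -> has_continuous_partials g2 g2t g2z ->
  has_continuous_partials (fun t z => g1 t z + k * g2 t z)
    (fun t z => g1t t z + k * g2t t z) (fun t z => g1z t z + k * g2z t z).
Proof.
  intros [H1t [H1z [H1ct H1cz]]] [H2t [H2z [H2ct H2cz]]].
  split; [|split; [|split]].
  - intros t z. apply (is_derive_plus (fun s => g1 s z) (fun s => k * g2 s z)); [apply H1t|].
    apply is_derive_scal, H2t.
  - intros t z. apply (is_derive_plus (g1 t) (fun s => k * g2 t s)); [apply H1z|].
    apply is_derive_scal, H2z.
  - intros p. apply (continuous_plus (fun q : R * R => g1t (fst q) (snd q))); [apply H1ct|].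
    apply (continuous_mult (fun _ : R * R => k)); [apply continuous_const | apply H2ct].
  - intros p. apply (continuous_plus (fun q : R * R => g1z (fst q) (snd q))); [apply H1cz|].
    apply (continuous_mult (fun _ : R * R => k)); [apply continuous_const | apply H2cz].
Qed.

Lemma continuous_shear (K : R -> R -> R) (c : R) :
  (forall p, continuous (fun q : R * R => K (fst q) (snd q)) p) ->
  forall p, continuous (fun q : R * R => K (fst q) (snd q + c * fst q)) p.
Proof.
  intros HK p.
  apply (continuous_comp_2 (fun q : R * R => fst q) (fun q : R * R => snd q + c * fst q) K).
  - apply continuous_fst.
  - apply (continuous_plus (fun q : R * R => snd q) (fun q : R * R => c * fst q));
      [apply continuous_snd|].
    apply (continuous_mult (fun _ : R * R => c) (fun q : R * R => fst q));
      [apply continuous_const | apply continuous_fst].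
  - apply HK.
Qed.

Lemma has_continuous_partials_shear (g gt gz : R -> R -> R) (c : R) :
  has_continuous_partials g gt gz ->
  has_continuous_partials (fun t y => g t (y + c * t))
    (fun t y => gt t (y + c * t) + c * gz t (y + c * t)) (fun t y => gz t (y + c * t)).
Proof.
  intros [Ht [Hz [Hct Hcz]]]. split; [|split; [|split]].
  - intros t y.
    assert (HF := is_derive_filterdiff g t (y + c * t) gt (gz t (y + c * t))
      (filter_forall _ (fun q => Ht (fst q) (snd q))) (Hz _ _) (Hct _)).
    assert (HD : differentiable_pt_lim g t (y + c * t) (gt t (y + c * t)) (gz t (y + c * t))).
    { apply filterdiff_differentiable_pt_lim.
      eapply filterdiff_ext_lin; [exact HF|]. intros [p1 p2]. simpl.
      unfold plus, scal; simpl; unfold mult; simpl. ring. }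
    assert (H1 : derivable_pt_lim (fun s => s) t 1).
    { apply is_derive_Reals. auto_derive; auto. }
    assert (H2 : derivable_pt_lim (fun s => y + c * s) t c).
    { apply is_derive_Reals. auto_derive; auto. ring. }
    apply is_derive_Reals.
    replace (gt t (y + c * t) + c * gz t (y + c * t))
      with (gt t (y + c * t) * 1 + gz t (y + c * t) * c) by ring.
    exact (derivable_pt_lim_comp_2d g _ _ t _ _ _ _ HD H1 H2).
  - intros t. exact (is_derive_shift (g t) (gz t) (c * t) (Hz t)).
  - intros p. apply (continuous_plus (fun q : R * R => gt (fst q) (snd q + c * fst q)));
      [apply continuous_shear, Hct|].
    apply (continuous_mult (fun _ : R * R => c)); [apply continuous_const|].
    apply continuous_shear, Hcz.
  - apply continuous_shear, Hcz.
Qed.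

Lemma is_derive_RInt_param_weight (g gt gz : R -> R -> R) (w : R -> R) (a b x : R) :
  has_continuous_partials g gt gz -> (forall y, continuous w y) ->
  is_derive (fun u => RInt (fun y => w y * g u y) a b) x (RInt (fun y => w y * gt x y) a b).
Proof.
  intros [Ht [Hz [Hct _]]] Hw.
  assert (Hdt : forall u y, is_derive (fun s => w y * g s y) u (w y * gt u y))
    by (intros u y; apply is_derive_scal, Ht).
  rewrite <- (RInt_ext (fun y => Derive (fun s => w y * g s y) x))
    by (intros y _; apply is_derive_unique, Hdt).
  apply (is_derive_RInt_param (fun u y => w y * g u y)).
  - apply filter_forall. intros u y _. eexists. apply Hdt.
  - intros y _.
    apply continuity_2d_pt_ext with (f := fun u v => w v * gt u v).
    { intros u v. symmetry. apply is_derive_unique, Hdt. }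
    apply continuity_2d_pt_filterlim.
    apply (continuous_mult (fun q : R * R => w (snd q)) (fun q : R * R => gt (fst q) (snd q)));
      [|apply Hct].
    apply (continuous_comp (fun q : R * R => snd q) w); [apply continuous_snd | apply Hw].
  - apply filter_forall. intros u.
    apply (@ex_RInt_continuous R_CompleteNormedModule). intros y _.
    apply (continuous_mult w (g u)); [apply Hw|].
    exact (is_derive_continuous _ _ (Hz u) y).
Qed.

Lemma is_RInt_transport_derivative_0 (g gt gz gtt gtz : R -> R -> R) (w : R -> R) (c T : R) :
  has_continuous_partials g gt gz ->
  has_continuous_partials (fun t z => gt t z + c * gz t z) gtt gtz ->
  (forall t z, T < Rabs t -> g t z = 0) -> (forall y, continuous w y) ->
  forall a b, is_RInt
    (fun t => RInt (fun y => w y * (gt t (y + c * t) + c * gz t (y + c * t))) a b) (- T) T 0.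
Proof.
  intros Hg Hgt Hsupp Hw a b.
  set (H := fun t => RInt (fun y => w y * g t (y + c * t)) a b).
  set (dH := fun t => RInt (fun y => w y * (gt t (y + c * t) + c * gz t (y + c * t))) a b).
  assert (HdH : forall t, is_derive H t (dH t))
    by (intros t; exact (is_derive_RInt_param_weight _ _ _ w a b t
                          (has_continuous_partials_shear g gt gz c Hg) Hw)).
  assert (HcdH : forall t, continuous dH t).
  { intros t. apply ex_derive_continuous_R. eexists.
    exact (is_derive_RInt_param_weight _ _ _ w a b t
             (has_continuous_partials_shear _ _ _ c Hgt) Hw). }
  assert (HT : forall t, T <= Rabs t -> H t = 0).
  { intros t Ht. unfold H. rewrite (RInt_ext _ (fun _ => 0)), RInt_const.
    - unfold scal; simpl; unfold mult; simpl. ring.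
    - intros y _. cbv beta.
      assert (Hg0 : g t (y + c * t) = 0).
      { apply (continuous_eq0_boundary (fun s => g s (y + c * t)) T t); [| |exact Ht].
        + exact (is_derive_continuous _ _ (fun s => proj1 Hg s _) t).
        + intros s Hs. apply Hsupp, Hs. }
      rewrite Hg0. apply Rmult_0_r. }
  replace 0 with (H T - H (- T)) by (rewrite !HT; [ring | rewrite Rabs_Ropp | ]; apply Rle_abs).
  apply (is_RInt_derive H dH); intros t _; auto.
Qed.

(** * The peaked wave *)

Definition profile (c y : R) : R := c / 26 * (12 * y ^ 2 + 23).

Definition flux_const (c l : R) : R := (1380 * l - 659) * c ^ 2 / 1690.

Definition flux (c l v : R) : R := c * v - v ^ 2 / 2 + flux_const c l.

Lemma continuous_profile (c y : R) : continuous (profile c) y.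
Proof. apply ex_derive_continuous_R. unfold profile. auto_derive. exact I. Qed.

Lemma is_RInt_profile (c : R) : is_RInt (profile c) (-/2) (/2) (12 * c / 13).
Proof.
  set (Q := fun y => c * (2 * y ^ 3 / 13 + 23 * y / 26)).
  replace (12 * c / 13) with (Q (/2) - Q (-/2)) by (unfold Q; field).
  apply (is_RInt_derive Q).
  - intros x _. unfold Q, profile. auto_derive; auto. field.
  - intros x _. apply continuous_profile.
Qed.

Lemma is_RInt_flux_profile (c l : R) :
  is_RInt (fun y => flux c l (profile c y)) (-/2) (/2) ((18 + 138 * l) * c ^ 2 / 169).
Proof.
  set (Q := fun y => c ^ 2 * (2 * y ^ 3 / 13 + 23 * y / 26)
                     - c ^ 2 * (18 * y ^ 5 / 845 + 23 * y ^ 3 / 169 + 529 * y / 1352)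
                     + flux_const c l * y).
  replace ((18 + 138 * l) * c ^ 2 / 169) with (Q (/2) - Q (-/2))
    by (unfold Q, flux_const; field).
  apply (is_RInt_derive Q).
  - intros x _. unfold Q, flux, profile. auto_derive; auto. field.
  - intros x _. apply ex_derive_continuous_R. unfold flux, profile. auto_derive; auto.
Qed.

Lemma Derive_wave_window (phi : R -> R) (c s y : R) :
  (forall x, -/2 <= x <= /2 -> phi x = profile c x) -> -/2 < y < /2 ->
  Derive (fun x => phi (x - s)) (y + s) = 12 * c / 13 * y.
Proof.
  intros Hwin Hy.
  rewrite (Derive_ext_loc _ (fun x => profile c (x - s))).
  - apply is_derive_unique. unfold profile. auto_derive; auto.
    replace (y + s - s) with y by ring. field.
  - assert (He : 0 < Rmin (/2 - y) (y + /2)) by (apply Rmin_glb_lt; lra).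
    exists (mkposreal _ He). intros x Hx.
    change (Rabs (x - (y + s)) < Rmin (/2 - y) (y + /2)) in Hx.
    apply Rabs_lt_between in Hx.
    pose proof (Rmin_l (/2 - y) (y + /2)). pose proof (Rmin_r (/2 - y) (y + /2)).
    apply Hwin. lra.
Qed.

(* The boundary terms vanish because [profile c (1/2) = profile c (-1/2) = c]: the flux is even
   and its derivative [(c - profile) * profile'] is zero at the peak, so no Dirac mass appears. *)
Lemma is_RInt_flux_green (c l : R) (q q1 q2 : R -> R) :
  (forall y, is_derive q y (q1 y)) -> (forall y, is_derive q1 y (q2 y)) ->
  (forall y, continuous q2 y) -> q1 (/2) = q1 (-/2) ->
  is_RInt (fun y => ((c - profile c y) * (12 * c / 13) - (12 * c / 13 * y) ^ 2) * q y
                    - flux c l (profile c y) * q2 y) (-/2) (/2) 0.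
Proof.
  intros Hq Hq1 Hq2 Hq1per.
  set (P := fun y => flux c l (profile c y)).
  set (P1 := fun y => (c - profile c y) * (12 * c / 13 * y)).
  set (P2 := fun y => (c - profile c y) * (12 * c / 13) - (12 * c / 13 * y) ^ 2).
  replace 0 with ((P1 (/2) * q (/2) - P (/2) * q1 (/2)) - (P1 (-/2) * q (-/2) - P (-/2) * q1 (-/2)))
    by (rewrite Hq1per; unfold P, P1, flux, profile; field).
  apply (is_RInt_green P P1 P2 q q1 q2); auto; intros y; unfold P, P1, P2, flux, profile.
  - auto_derive; auto. field.
  - auto_derive; auto. field.
  - apply ex_derive_continuous_R. auto_derive; auto.
Qed.

Lemma flux_window_identity (c l : R) (q q1 q2 : R -> R) :
  (forall y, is_derive q y (q1 y)) -> (forall y, is_derive q1 y (q2 y)) ->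
  (forall y, continuous q2 y) -> q1 (/2) = q1 (-/2) ->
  exists I,
    is_RInt (fun y => flux c l (profile c y) * (RInt q (-/2) (/2) - q2 y)) (-/2) (/2) I /\
    is_RInt (fun y => (l * (12 * c / 13) * profile c y + (3 - l) / 2 * (12 * c / 13 * y) ^ 2)
                      * q y) (-/2) (/2) I.
Proof.
  intros Hq Hq1 Hq2 Hq1per.
  set (m := RInt q (-/2) (/2)).
  set (A := (18 + 138 * l) * c ^ 2 / 169).
  set (S := fun y => l * (12 * c / 13) * profile c y + (3 - l) / 2 * (12 * c / 13 * y) ^ 2).
  assert (Hm : is_RInt q (-/2) (/2) m)
    by exact (is_RInt_RInt_continuous _ _ _ (is_derive_continuous _ _ Hq)).
  assert (HS : is_RInt (fun y => S y * q y) (-/2) (/2) (RInt (fun y => S y * q y) (-/2) (/2))).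
  { apply is_RInt_RInt_continuous. intros y.
    apply (continuous_mult S q); [|exact (is_derive_continuous _ _ Hq y)].
    apply ex_derive_continuous_R. unfold S, profile. auto_derive; auto. }
  assert (Hmean := is_RInt_minus _ _ _ _ _ _ (is_RInt_scal _ _ _ m _ (is_RInt_flux_profile c l))
                     (is_RInt_scal _ _ _ A _ Hm)).
  assert (H := is_RInt_plus _ _ _ _ _ _
                 (is_RInt_plus _ _ _ _ _ _ Hmean (is_RInt_flux_green c l q q1 q2 Hq Hq1 Hq2 Hq1per))
                 HS).
  set (I := RInt (fun y => S y * q y) (-/2) (/2)) in *.
  exists I. split; [|exact HS].
  unfold minus, plus, opp, scal in H; simpl in H; unfold mult in H; simpl in H.
  match type of H with is_RInt _ _ _ ?v => replace I with v by (unfold A; simpl; ring) end.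
  eapply is_RInt_ext; [|exact H]. intros y _. simpl.
  unfold S, A, flux, flux_const, profile. field.
Qed.

Section TravelingWave.

Variables (c l : R) (phi : R -> R).
Hypothesis phi_periodic : periodic1 phi.
Hypothesis phi_window : forall x, -/2 <= x <= /2 -> phi x = profile c x.

Lemma periodic1_wave (s : R) : periodic1 (fun x => phi (x - s)).
Proof. intros x. replace (x + 1 - s) with (x - s + 1) by ring. apply phi_periodic. Qed.

Lemma wave_window (s y : R) : -/2 < y < /2 -> phi (y + s - s) = profile c y.
Proof. intros Hy. replace (y + s - s) with y by ring. apply phi_window. lra. Qed.

Lemma mu_wave (s : R) : mu (fun x => phi (x - s)) = 12 * c / 13.
Proof.
  apply is_RInt_unique.
  apply (is_RInt_periodic_window _ (profile c) s); [apply periodic1_wave | apply wave_window |].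
  apply is_RInt_profile.
Qed.

Lemma Lambda2_flux_test (s : R) (chi : R -> R) :
  smooth1 chi -> periodic1 chi ->
  ex_RInt (fun x => flux c l (phi (x - s)) * (mu chi - Derive_n chi 2 x)) 0 1 /\
  ex_RInt (fun x => (l * (12 * c / 13) * phi (x - s)
                     + (3 - l) / 2 * Derive (fun y => phi (y - s)) x ^ 2) * chi x) 0 1 /\
  RInt (fun x => flux c l (phi (x - s)) * (mu chi - Derive_n chi 2 x)) 0 1
    = RInt (fun x => (l * (12 * c / 13) * phi (x - s)
                      + (3 - l) / 2 * Derive (fun y => phi (y - s)) x ^ 2) * chi x) 0 1.
Proof.
  intros [D [HD0 HD]] Hchi. subst chi.
  assert (HD2 : forall x, Derive_n (D 0%nat) 2 x = D 2%nat x).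
  { intros x. simpl. rewrite (Derive_ext _ (D 1%nat)) by (intros; apply is_derive_unique, HD).
    apply is_derive_unique, HD. }
  set (q := fun n y => D n (y + s)).
  assert (Hq : forall n y, is_derive (q n) y (q (S n) y))
    by (intros n; apply is_derive_shift, HD).
  assert (Hq1 : q 1%nat (/2) = q 1%nat (-/2)).
  { unfold q. replace (/2 + s) with (-/2 + s + 1) by field.
    exact (periodic1_is_derive _ _ Hchi (HD 0%nat) _). }
  assert (Hmu : mu (D 0%nat) = RInt (q 0%nat) (-/2) (/2)).
  { apply is_RInt_unique, (is_RInt_periodic_window _ (q 0%nat) s); [exact Hchi | reflexivity |].
    exact (is_RInt_RInt_continuous _ _ _ (is_derive_continuous _ _ (Hq 0%nat))). }
  destruct (flux_window_identity c l (q 0%nat) (q 1%nat) (q 2%nat) (Hq 0%nat) (Hq 1%nat)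
              (is_derive_continuous _ _ (Hq 2%nat)) Hq1) as [I [HI1 HI2]].
  assert (G1 : is_RInt (fun x => flux c l (phi (x - s)) * (mu (D 0%nat) - Derive_n (D 0%nat) 2 x))
                 0 1 I).
  { eapply (is_RInt_periodic_window _ _ s); [| |exact HI1].
    - intros x. cbv beta. rewrite periodic1_wave, (periodic1_Derive_n _ 2 Hchi). reflexivity.
    - intros y Hy. cbv beta. rewrite wave_window, HD2, Hmu by exact Hy. reflexivity. }
  assert (G2 : is_RInt (fun x => (l * (12 * c / 13) * phi (x - s)
                                  + (3 - l) / 2 * Derive (fun y => phi (y - s)) x ^ 2)
                                 * D 0%nat x) 0 1 I).
  { eapply (is_RInt_periodic_window _ _ s); [| |exact HI2].
    - intros x. cbv beta.
      rewrite periodic1_wave, (periodic1_Derive _ (periodic1_wave s)), Hchi. reflexivity.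
    - intros y Hy. cbv beta. rewrite wave_window by exact Hy.
      rewrite (Derive_wave_window phi c s y phi_window Hy). reflexivity. }
  split; [eexists; exact G1|]. split; [eexists; exact G2|].
  rewrite (is_RInt_unique _ _ _ _ G1), (is_RInt_unique _ _ _ _ G2). reflexivity.
Qed.

Lemma Lambda_inv2_flux (s : R) :
  Lambda_inv2
    (fun x => l * mu (fun x => phi (x - s)) * phi (x - s)
              + (3 - l) / 2 * Derive (fun y => phi (y - s)) x ^ 2)
    (fun x => flux c l (phi (x - s))).
Proof.
  rewrite mu_wave.
  split; [|split].
  - intros x. cbv beta. rewrite periodic1_wave. reflexivity.
  - eexists. apply (is_RInt_periodic_window _ (fun y => flux c l (profile c y)) s).
    + intros x. cbv beta. rewrite periodic1_wave. reflexivity.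
    + intros y Hy. cbv beta. rewrite wave_window by exact Hy. reflexivity.
    + apply is_RInt_flux_profile.
  - intros chi Hsmooth Hchi. exact (Lambda2_flux_test s chi Hsmooth Hchi).
Qed.

Lemma is_RInt_weak_integrand (s : R) (psi psit psix : R -> R) :
  periodic1 psi -> periodic1 psit -> (forall x, is_derive psi x (psix x)) ->
  (forall x, continuous psix x) -> (forall x, continuous psit x) ->
  is_RInt (fun x => - phi (x - s) * psit x
                    + phi (x - s) * Derive (fun y => phi (y - s)) x * psi x
                    - flux c l (phi (x - s)) * psix x) 0 1
    (- RInt (fun y => profile c y * (psit (y + s) + c * psix (y + s))) (-/2) (/2)).
Proof.
  intros Hpsi Hpsit Hpsix Hcx Hct.
  assert (Hpsix_per : periodic1 psix) by exact (periodic1_is_derive _ _ Hpsi Hpsix).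
  set (V := fun y => profile c y ^ 2 / 2 - flux_const c l).
  set (V' := fun y => profile c y * (12 * c / 13 * y)).
  assert (HW := is_RInt_scal_derive V (fun y => psi (y + s)) V' (fun y => psix (y + s)) (-/2) (/2)
    (fun y _ => ltac:(unfold V, V', profile; auto_derive; auto; field))
    (fun y _ => is_derive_shift _ _ s Hpsix y)
    (fun y _ => ltac:(apply ex_derive_continuous_R; unfold V', profile; auto_derive; auto))
    (fun y _ => continuous_shift _ s Hcx y)).
  cbv beta in HW.
  match type of HW with is_RInt _ _ _ ?v => assert (HW0 : v = 0) end.
  { replace (/2 + s) with (-/2 + s + 1) by field. rewrite Hpsi.
    unfold minus, plus, opp, scal; simpl; unfold mult; simpl. unfold V, profile. field. }
  rewrite HW0 in HW.
  set (h := fun y => profile c y * (psit (y + s) + c * psix (y + s))).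
  assert (Hh : is_RInt h (-/2) (/2) (RInt h (-/2) (/2))).
  { apply is_RInt_RInt_continuous. intros y.
    apply (continuous_mult (profile c)); [apply continuous_profile|].
    apply (continuous_plus (fun y => psit (y + s))); [apply continuous_shift, Hct|].
    apply (continuous_mult (fun _ => c)); [apply continuous_const | apply continuous_shift, Hcx]. }
  assert (H := is_RInt_minus _ _ _ _ _ _ HW Hh).
  replace (- RInt h (-/2) (/2)) with (minus 0 (RInt h (-/2) (/2)))
    by (unfold minus, plus, opp; simpl; ring).
  eapply (is_RInt_periodic_window _ _ s); [| |exact H].
  - intros x. cbv beta.
    rewrite periodic1_wave, (periodic1_Derive _ (periodic1_wave s)), Hpsi, Hpsit, Hpsix_per.
    reflexivity.
  - intros y Hy. cbv beta. rewrite wave_window by exact Hy.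
    rewrite (Derive_wave_window phi c s y phi_window Hy).
    unfold minus, plus, opp, scal; simpl; unfold mult; simpl. unfold h, V, V', flux. ring.
Qed.

Lemma weak_solution_wave : weak_solution l (fun t x => phi (x - c * t)).
Proof.
  split; [intros t; apply periodic1_wave|].
  exists (fun t x => flux c l (phi (x - c * t))).
  split; [intros t; apply Lambda_inv2_flux|].
  intros psi T [[D [HD0 [HDt [HDx HDc]]]] [Hpsi Hsupp]] integrand. subst psi.
  assert (HP := smooth2_partials D HDt HDx HDc).
  assert (HD10 : forall t, periodic1 (D 1%nat 0%nat t)).
  { intros t x. rewrite <- (is_derive_unique _ _ _ (HDt 0%nat 0%nat t (x + 1))),
      <- (is_derive_unique _ _ _ (HDt 0%nat 0%nat t x)).
    apply Derive_ext. intros s. apply Hpsi. }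
  assert (Hcx : forall i j t x, continuous (D i j t) x)
    by (intros i j t; exact (is_derive_continuous _ _ (HDx i j t))).
  assert (Hint : forall t, is_RInt (fun x => integrand t x) 0 1
    (- RInt (fun y => profile c y * (D 1%nat 0%nat t (y + c * t) + c * D 0%nat 1%nat t (y + c * t)))
         (-/2) (/2))).
  { intros t. eapply is_RInt_ext;
      [|exact (is_RInt_weak_integrand (c * t) _ _ _ (Hpsi t) (HD10 t) (HDx 0%nat 0%nat t)
                 (Hcx 0%nat 1%nat t) (Hcx 1%nat 0%nat t))].
    intros x _. unfold integrand.
    replace (Derive (fun s => D 0%nat 0%nat s x) t) with (D 1%nat 0%nat t x)
      by (symmetry; apply is_derive_unique, HDt).
    replace (Derive (fun y => D 0%nat 0%nat t y) x) with (D 0%nat 1%nat t x)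
      by (symmetry; apply is_derive_unique, HDx).
    reflexivity. }
  assert (Htime := is_RInt_transport_derivative_0 _ _ _ _ _ (profile c) c T (HP 0%nat 0%nat)
    (has_continuous_partials_plus_scal _ _ _ _ _ _ c (HP 1%nat 0%nat) (HP 0%nat 1%nat)) Hsupp
    (continuous_profile c) (-/2) (/2)).
  apply is_RInt_opp in Htime. unfold opp in Htime; simpl in Htime. rewrite Ropp_0 in Htime.
  assert (Hweak : is_RInt (fun t => RInt (fun x => integrand t x) 0 1) (- T) T 0).
  { eapply is_RInt_ext; [|exact Htime]. intros t _.
    symmetry. exact (is_RInt_unique _ _ _ _ (Hint t)). }
  split; [intros t; eexists; apply Hint|].
  split; [eexists; exact Hweak | apply is_RInt_unique, Hweak].
Qed.

End TravelingWave.

Theorem theorem6p1 (c : R) (lam : Z) (phi : R -> R) :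
  lam <> 0%Z -> lam <> 1%Z ->
  (forall x, phi (x + 1) = phi x) ->
  (forall x, -/2 <= x <= /2 -> phi x = c / 26 * (12 * x ^ 2 + 23)) ->
  weak_solution (IZR lam) (fun t x => phi (x - c * t)).
Proof.
  (* The construction works for every [lam]. *)
  intros _ _ Hper Hwin. exact (weak_solution_wave c (IZR lam) phi Hper Hwin).
Qed.
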